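(* Let $\mathbb{G}$ be a partially commutative group, $x$ one of its canonical generators, $n\ge 2$, and let $\mathbb{H}=\langle \mathbb{G}, A\mid [A,C_{\mathbb{G}}(x)]=1\rangle$, where $A\cong\mathbb{Z}^{n-1}$ is free abelian (i.e. $\mathbb{H}$ is obtained from $\mathbb{G}$ by adjoining a free abelian group $A$ of rank $n-1$ whose elements commute with every element of the centraliser $C_{\mathbb{G}}(x)$). Then $\mathbb{H}$ is discriminated by $\mathbb{G}$.
   Context: A partially commutative group is $\mathbb{G}(\Gamma)=\langle V(\Gamma)\mid [x,y]=1 \text{ for } (x,y)\in E(\Gamma)\rangle$ for a finite simplicial graph $\Gamma$; its canonical generators are the elements of $V(\Gamma)$. A group $H$ is discriminated by $G$ if for every finite set $S\subseteq H$ there is a homomorphism $H\to G$ that is injective on $S$. *)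

(* Groups given by presentations are encoded as
   words over generators modulo the congruence generated by free
   cancellation and the relators (i.e. the quotient of the free group by the
   normal closure of the relators). *)
From Stdlib Require List.
From mathcomp Require Import all_boot.
Set Implicit Arguments. Unset Strict Implicit. Unset Printing Implicit Defensive.

(* A letter is a generator together with a sign: (a, false) = a, (a, true) = a^-1. *)
Definition word (X : Type) := seq (X * bool).

Definition winv (X : Type) (w : word X) : word X :=
  rev (map (fun l => (l.1, ~~ l.2)) w).

Definition wcomm (X : Type) (u v : word X) : word X :=
  winv u ++ winv v ++ u ++ v.

Definition gen (X : Type) (a : X) : word X := [:: (a, false)].

Inductive weq (X : Type) (R : word X -> Prop) : word X -> word X -> Prop :=
| weq_refl u : weq R u u
| weq_sym u v : weq R u v -> weq R v u
| weq_trans u v w : weq R u v -> weq R v w -> weq R u w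
| weq_cancel u v a b : weq R (u ++ [:: (a, b); (a, ~~ b)] ++ v) (u ++ v)
| weq_rel u v r : R r -> weq R (u ++ r ++ v) (u ++ v).

Definition pc_rel (T : Type) (e : rel T) (r : word T) : Prop :=
  exists x y, e x y /\ r = wcomm (gen x) (gen y).

Definition in_centraliser (T : Type) (e : rel T) (x : T) (c : word T) : Prop :=
  weq (pc_rel e) (c ++ gen x) (gen x ++ c).

(* H = < G, A | [A, C_G(x)] = 1 >, A = Z^(n-1) free abelian with basis
   a_0, ..., a_(n-2) (the generators inr i, i : 'I_n.-1). *)
Definition ext_rel (T : Type) (e : rel T) (x : T) (n : nat)
  (r : word (T + 'I_n.-1)) : Prop :=
  (exists r0, pc_rel e r0 /\ r = map (fun l => (inl l.1, l.2)) r0)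
  \/ (exists i j : 'I_n.-1, r = wcomm (gen (inr i)) (gen (inr j)))
  \/ (exists (i : 'I_n.-1) (c : word T), in_centraliser e x c /\
        r = wcomm (gen (inr i)) (map (fun l => (inl l.1, l.2)) c)).
Arguments ext_rel {T} e x n r.

Definition wsubst (X Y : Type) (f : X -> word Y) (w : word X) : word Y :=
  flatten (map (fun l => if l.2 then winv (f l.1) else f l.1) w).

(* f : generators of <X|R> -> <Y|Q> defines a homomorphism iff every relator
   is sent to the identity. *)
Definition is_hom (X Y : Type) (R : word X -> Prop) (Q : word Y -> Prop)
  (f : X -> word Y) : Prop :=
  forall r, R r -> weq Q (wsubst f r) [::].

Definition discriminated_by (X Y : Type) (R : word X -> Prop) (Q : word Y -> Prop)
  : Prop :=
  forall S : seq (word X), exists f : X -> word Y, is_hom R Q f /\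
    forall u v, Stdlib.Lists.List.In u S -> Stdlib.Lists.List.In v S -> ~ weq R u v ->
      ~ weq Q (wsubst f u) (wsubst f v).

From mathcomp Require Import all_boot all_algebra zify.
From Stdlib Require Import FunctionalExtensionality.
Set Implicit Arguments. Unset Strict Implicit. Unset Printing Implicit Defensive.
Import GRing.Theory.

(* Adjoining A to the vertex x turns G into a graph product in which x carries
   Z^n = <x> x A and every other vertex carries Z; the relators of H say
   exactly that A commutes with x and with its neighbours.  Graph products of
   abelian groups have a normal form by piles: one stack per vertex, where a
   syllable pushed at t blocks the stack of every non-neighbour of t and a
   syllable on top of a stack absorbs the next one at the same vertex.  Every
   word of H equals the word read off its pile, so equal piles mean equal
   elements of H; and in G the pile of a word only depends on the element.
   The homomorphism H -> G sending the i-th generator of A to x^(M^(i+1))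
   carries the pile of a word of H to the pile of its image, each syllable
   vector g becoming sum_j g_j M^j.  For M larger than twice every entry of
   the finitely many piles involved, this is injective, so distinct elements
   of a finite set stay distinct. *)

Section WordCongruence.
Variables (X : Type) (R : word X -> Prop).
Notation W := (weq R).

Lemma weq_cat p q u v : W u v -> W (p ++ u ++ q) (p ++ v ++ q).
Proof.
elim=> {u v} [u | u v _ | u v w _ H1 _ | u v a b | u v r Hr].
- exact: weq_refl.
- exact: weq_sym.
- exact: weq_trans.
- have := weq_cancel R (p ++ u) (v ++ q) a b.
  by rewrite -!catA.
- have := weq_rel (p ++ u) (v ++ q) Hr.
  by rewrite -!catA.
Qed.

Lemma weq_catl p u v : W u v -> W (p ++ u) (p ++ v).
Proof. by move=> H; have := weq_cat p [::] H; rewrite !cats0. Qed.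

Lemma weq_catr q u v : W u v -> W (u ++ q) (v ++ q).
Proof. exact: weq_cat [::] q u v. Qed.

Lemma weq_cat2 u u' v v' : W u u' -> W v v' -> W (u ++ v) (u' ++ v').
Proof. by move=> Hu Hv; apply: weq_trans (weq_catr v Hu) (weq_catl u' Hv). Qed.

Lemma weq_rel1 r : R r -> W r [::].
Proof. by move=> Hr; have := weq_rel [::] [::] Hr; rewrite /= cats0. Qed.

Lemma winv_cat (u v : word X) : winv (u ++ v) = winv v ++ winv u.
Proof. by rewrite /winv map_cat rev_cat. Qed.

Lemma winv_cons l (u : word X) : winv (l :: u) = winv u ++ [:: (l.1, ~~ l.2)].
Proof. by rewrite /winv /= rev_cons cats1. Qed.

Lemma winvK : involutive (@winv X).
Proof.
move=> u; rewrite /winv map_rev revK -map_comp -[RHS]map_id.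
by apply: eq_map => -[a b] /=; rewrite negbK.
Qed.

Lemma weq_mulV (u : word X) : W (u ++ winv u) [::].
Proof.
elim: u => [|[a b] u IH] /=; first exact: weq_refl.
rewrite winv_cons catA.
apply: weq_trans (weq_cat [:: (a, b)] [:: (a, ~~ b)] IH) _.
exact: weq_cancel R [::] [::] a b.
Qed.

Lemma weq_Vmul (u : word X) : W (winv u ++ u) [::].
Proof. by have := weq_mulV (winv u); rewrite winvK. Qed.

Definition wcommute (u v : word X) := W (u ++ v) (v ++ u).

Lemma wcommute_sym u v : wcommute u v -> wcommute v u.
Proof. exact: weq_sym. Qed.

Lemma wcommute0 u : wcommute u [::].
Proof. by rewrite /wcommute cats0; apply: weq_refl. Qed.

Lemma wcommute_catr u v1 v2 :
  wcommute u v1 -> wcommute u v2 -> wcommute u (v1 ++ v2).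
Proof.
move=> H1 H2; rewrite /wcommute catA.
apply: weq_trans (weq_catr v2 H1) _.
by rewrite -!catA; apply: weq_catl.
Qed.

Lemma wcommute_catl u1 u2 v :
  wcommute u1 v -> wcommute u2 v -> wcommute (u1 ++ u2) v.
Proof. by move=> /wcommute_sym H1 /wcommute_sym H2; apply/wcommute_sym/wcommute_catr. Qed.

Lemma wcommute_inv1 l1 l2 :
  wcommute [:: l1] [:: l2] -> wcommute [:: (l1.1, ~~ l1.2)] [:: l2].
Proof.
case: l1 => a b /= H; set ai := (a, ~~ b); rewrite /wcommute /=.
apply: weq_trans (_ : W ([:: ai; l2] ++ [:: (a, b); ai] ++ [::]) _).
  exact/weq_sym/(weq_cancel R [:: ai; l2] [::] a b).
apply: weq_trans (weq_cat [:: ai] [:: ai] (weq_sym H)) _.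
by have := weq_cancel R [::] [:: l2; ai] a (~~ b); rewrite negbK.
Qed.

Lemma wcommute_signs a b c d :
  wcommute [:: (a, false)] [:: (c, false)] -> wcommute [:: (a, b)] [:: (c, d)].
Proof.
move=> H.
have Ha : wcommute [:: (a, b)] [:: (c, false)] by case: b; [exact: wcommute_inv1 H | exact: H].
apply: wcommute_sym; case: d; last exact: wcommute_sym.
exact: wcommute_inv1 (wcommute_sym Ha).
Qed.

Lemma wcommute_nseq l1 l2 n k :
  wcommute [:: l1] [:: l2] -> wcommute (nseq n l1) (nseq k l2).
Proof.
move=> H.
have H1 k' : wcommute [:: l1] (nseq k' l2).
  by elim: k' => [|k' IH]; [exact: wcommute0 | exact: wcommute_catr H IH].
elim: n => [|n IH]; first exact/wcommute_sym/wcommute0.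
exact: wcommute_catl (H1 k) IH.
Qed.

Lemma wcommute_of_rel a c : R (wcomm (gen a) (gen c)) -> wcommute (gen c) (gen a).
Proof.
move=> /(weq_rel [:: (c, false); (a, false)] [::]) /= /weq_sym H.
apply: weq_trans H _.
apply: weq_trans (weq_cancel R [:: (c, false)] [:: (c, true); (a, false); (c, false)] a false) _.
exact: weq_cancel R [::] [:: (a, false); (c, false)] c false.
Qed.

Definition wpow (a : X) (k : int) : word X :=
  match k with Posz n => nseq n (a, false) | Negz n => nseq n.+1 (a, true) end.

Lemma weq_nseq_cancel a b p q :
  W (nseq p (a, b) ++ nseq q (a, ~~ b)) (nseq (p - q) (a, b) ++ nseq (q - p) (a, ~~ b)).
Proof.
elim: q p => [|q IH] [|p]; rewrite ?subn0 ?sub0n ?cats0 /=; try exact: weq_refl.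
rewrite !subSS; apply: weq_trans (IH p).
have -> : (a, b) :: nseq p (a, b) ++ (a, ~~ b) :: nseq q (a, ~~ b)
        = nseq p (a, b) ++ [:: (a, b); (a, ~~ b)] ++ nseq q (a, ~~ b).
  by rewrite -[(a, b) :: _]/(nseq p.+1 (a, b) ++ _) -addn1 nseqD -catA.
exact: weq_cancel.
Qed.

Lemma wpow_subn a p q :
  wpow a (Posz p - Posz q)%R = nseq (p - q) (a, false) ++ nseq (q - p) (a, true).
Proof.
case: (leqP q p) => h.
  have -> : (Posz p - Posz q)%R = Posz (p - q) by lia.
  have -> : q - p = 0 by lia.
  by rewrite cats0.
have -> : (Posz p - Posz q)%R = Negz (q - p).-1 by lia.
have -> : p - q = 0 by lia.
by have -> : q - p = (q - p).-1.+1 by lia.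
Qed.

Lemma wpowD a k k' : W (wpow a k ++ wpow a k') (wpow a (k + k')%R).
Proof.
case: k => [p|n]; case: k' => [p'|n'] /=.
- by rewrite -nseqD; apply: weq_refl.
- have -> : (Posz p + Negz n')%R = (Posz p - Posz n'.+1)%R by lia.
  by rewrite wpow_subn; apply: weq_nseq_cancel a false p n'.+1.
- have -> : (Negz n + Posz p')%R = (Posz p' - Posz n.+1)%R by lia.
  rewrite wpow_subn; apply: weq_trans (weq_nseq_cancel a true n.+1 p') _ => /=.
  case: (leqP p' n.+1) => h.
    have -> : p' - n.+1 = 0 by lia.
    by rewrite cats0; apply: weq_refl.
  have -> : n.+1 - p' = 0 by lia.
  by rewrite cats0; apply: weq_refl.
- rewrite -[(a, true) :: nseq n' _]/(nseq n'.+1 (a, true)) -nseqD addnS.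
  exact: weq_refl.
Qed.

Lemma wcommute_wpow a c k k' :
  wcommute (gen a) (gen c) -> wcommute (wpow a k) (wpow c k').
Proof. by move=> H; case: k => ?; case: k' => ?; apply/wcommute_nseq/wcommute_signs. Qed.

End WordCongruence.

Section WordSubstitution.
Variables (X Y : Type) (f : X -> word Y).

Lemma wsubst_cat u v : wsubst f (u ++ v) = wsubst f u ++ wsubst f v.
Proof. by rewrite /wsubst map_cat flatten_cat. Qed.

Lemma wsubst_winv u : wsubst f (winv u) = winv (wsubst f u).
Proof.
elim: u => [|[a b] u IH] //.
rewrite winv_cons wsubst_cat IH /= winv_cat; congr (_ ++ _).
by rewrite /wsubst /= cats0; case: b; rewrite /= ?winvK.
Qed.

Lemma is_hom_weq R Q u v : is_hom R Q f -> weq R u v -> weq Q (wsubst f u) (wsubst f v).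
Proof.
move=> Hf; elim=> {u v} [u | u v _ | u v w _ H1 _ | u v a b | u v r Hr].
- exact: weq_refl.
- exact: weq_sym.
- exact: weq_trans.
- rewrite !wsubst_cat; apply: (weq_cat _ _ (v := [::])).
  by rewrite /wsubst /= cats0; case: b => /=; [exact: weq_Vmul | exact: weq_mulV].
- by rewrite !wsubst_cat; apply: (weq_cat _ _ (v := [::])); apply: Hf.
Qed.

End WordSubstitution.

Lemma In_mem (A : eqType) (a : A) s : List.In a s -> a \in s.
Proof. by elim: s => [|b s IH] //= [->|/IH]; rewrite in_cons ?eqxx // => ->; rewrite orbT. Qed.

Lemma map_omap_inj (A B : eqType) (f : A -> B) (s1 s2 : seq (option A)) :
  (forall a b, Some a \in s1 -> Some b \in s2 -> f a = f b -> a = b) ->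
  map (omap f) s1 = map (omap f) s2 -> s1 = s2.
Proof.
elim: s1 s2 => [|a s1 IH] [|b s2] //= Hf [Eab Es].
congr (_ :: _); last by apply: IH Es => a' b' H1 H2; apply: Hf; rewrite in_cons ?H1 ?H2 orbT.
by case: a b Eab Hf => [a|] [b|] //= [E] Hf; rewrite (Hf a b) ?mem_head.
Qed.

Local Open Scope ring_scope.

Section Radix.
Variable M : nat.

Definition radix {k} (g : 'rV[int]_k) : int := \sum_(j < k) g 0 j * (M ^ j)%:Z.

Lemma radixS k (g : 'rV[int]_k.+1) :
  radix g = g 0 ord0 + \sum_(i < k) g 0 (lift ord0 i) * (M ^ i.+1)%:Z.
Proof. by rewrite /radix big_ord_recl expn0 mulr1. Qed.

Lemma radix_ord0 k (g : 'rV[int]_k.+1) :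
  (forall j, j != ord0 -> g 0 j = 0) -> radix g = g 0 ord0.
Proof.
by move=> Hg; rewrite radixS big1 ?addr0 // => i _; rewrite Hg ?mul0r ?neq_lift.
Qed.

Lemma radix0 k : radix (0 : 'rV[int]_k) = 0.
Proof. by rewrite /radix big1 // => j _; rewrite mxE mul0r. Qed.

Lemma radixB k (g h : 'rV[int]_k) : radix (g - h) = radix g - radix h.
Proof. by rewrite /radix -sumrB; apply: eq_bigr => j _; rewrite !mxE mulrBl. Qed.

Lemma radix_eq0 k (g : 'rV[int]_k) : (forall j, (absz (g 0%R j) < M)%N) -> radix g = 0 -> g = 0.
Proof.
elim: k g => [|k IH] g Hg; first by move=> _; apply/rowP => -[].
pose g' : 'rV[int]_k := \row_i g 0 (lift ord0 i).
have Hg' j : (absz (g' 0%R j) < M)%N by rewrite mxE.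
have -> : radix g = g 0 ord0 + M%:Z * radix g'.
  rewrite radixS mulr_sumr; congr (_ + _); apply: eq_bigr => i _.
  by rewrite mxE expnS PoszM mulrCA.
move=> H; have Hg0 := Hg ord0.
have Hr : radix g' = 0 by nia.
have Hg'0 := IH g' Hg' Hr.
apply/rowP => j; rewrite mxE; case: (unliftP ord0 j) => [i ->|->].
  by have := congr1 (fun v : 'rV[int]_k => v 0 i) Hg'0; rewrite !mxE.
by move: H; rewrite Hr mulr0 addr0.
Qed.

Lemma radix_inj k B (g h : 'rV[int]_k) : (2 * B < M)%N ->
  (forall j, (absz (g 0%R j) <= B)%N) -> (forall j, (absz (h 0%R j) <= B)%N) ->
  radix g = radix h -> g = h.
Proof.
move=> HM Hg Hh E; apply/eqP; rewrite -subr_eq0; apply/eqP/radix_eq0.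
  move=> j; rewrite !mxE; have := Hg j; have := Hh j.
  by move: (g 0 j) (h 0 j) => a b; lia.
by rewrite radixB E subrr.
Qed.

End Radix.


Section Piles.
Variables (T : eqType) (e : rel T).
Hypotheses (e_sym : symmetric e) (e_irr : irreflexive e).

Lemma adj_neq t u : e t u -> t != u.
Proof. by apply: contraTneq => ->; rewrite e_irr. Qed.

Section PileOperations.
Variable V : zmodType.

(* A stack of syllables per vertex; [None] is a blocker, recording a syllable
   pushed later at a vertex that does not commute with this one. *)
Definition pile := T -> seq (option V).
Definition pile0 : pile := fun=> [::].
Definition top t (s : pile) := head None (s t).
Definition push t g (s : pile) : pile :=
  fun w => if w == t then Some g :: s w else if e t w then s w else None :: s w.
Definition pop t (s : pile) : pile :=
  fun w => if w == t then behead (s w) else if e t w then s w else behead (s w).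
Definition push_nz t g s := if g == 0 then s else push t g s.
Definition top_val t s := if top t s is Some h then h else 0.
Definition pop_val t s := if top t s is Some _ then pop t s else s.
Definition pile_act t g s := push_nz t (top_val t s + g) (pop_val t s).

Inductive wf_pile : pile -> Prop :=
| wf_pile0 : wf_pile pile0
| wf_push s t g : wf_pile s -> top t s = None -> g != 0 -> wf_pile (push t g s).

Lemma pop_push t g s : pop t (push t g s) = s.
Proof.
apply: functional_extensionality => w; rewrite /pop /push.
by case: (w =P t) => //= _; case: (e t w).
Qed.

Lemma top_push t g s : top t (push t g s) = Some g.
Proof. by rewrite /top /push eqxx. Qed.

Lemma top_push_adj u t g s : e u t -> top t (push u g s) = top t s.
Proof. by move=> Hut; rewrite /top /push eq_sym (negbTE (adj_neq Hut)) Hut. Qed.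

Lemma top_push_nadj u t g s : u != t -> ~~ e u t -> top t (push u g s) = None.
Proof. by move=> Hne Hut; rewrite /top /push eq_sym (negbTE Hne) (negbTE Hut). Qed.

Lemma push_comm t u g h s : e t u -> push t g (push u h s) = push u h (push t g s).
Proof.
move=> Htu; apply: functional_extensionality => w; rewrite /push.
case: (w =P t) => [->|_]; first by rewrite (negbTE (adj_neq Htu)) e_sym Htu.
by case: (w =P u) => [->|_]; [rewrite Htu | case: (e t w); case: (e u w)].
Qed.

Lemma push_nz_comm t u g h s :
  e t u -> push_nz t g (push_nz u h s) = push_nz u h (push_nz t g s).
Proof. by move=> Htu; rewrite /push_nz; case: (g == 0); case: (h == 0) => //; rewrite push_comm. Qed.

Lemma top_push_nz_adj u t g s : e u t -> top t (push_nz u g s) = top t s.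
Proof. by move=> Hut; rewrite /push_nz; case: (g == 0); rewrite ?top_push_adj. Qed.

Lemma wf_pile_top t s h : wf_pile s -> top t s = Some h ->
  [/\ wf_pile (pop t s), top t (pop t s) = None, h != 0 & s = push t h (pop t s)].
Proof.
move=> Hs; elim: Hs h => {s} [|s u g Hs IH Hu Hg] h //.
have [<-|Hne] := eqVneq u t.
  by rewrite top_push => -[<-]; rewrite pop_push.
case Eut: (e u t); last by rewrite top_push_nadj ?Eut.
have Etu : e t u by rewrite e_sym.
rewrite top_push_adj // => /IH [Hv Htop Hh Es].
have -> : push u g s = push t h (push u g (pop t s)) by rewrite {1}Es push_comm.
rewrite pop_push; split; rewrite ?top_push_adj //.
by apply: wf_push; rewrite // -Hu {2}Es top_push_adj.
Qed.

Lemma wf_pile_val t s : wf_pile s ->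
  [/\ wf_pile (pop_val t s), top t (pop_val t s) = None
    & s = push_nz t (top_val t s) (pop_val t s)].
Proof.
rewrite /pop_val /top_val; case Et: (top t s) => [h|] Hs; last by rewrite /push_nz eqxx.
by have [Hv Htop Hh Es] := wf_pile_top Hs Et; rewrite /push_nz (negbTE Hh).
Qed.

Lemma push_nz_val t k s : top t s = None ->
  top_val t (push_nz t k s) = k /\ pop_val t (push_nz t k s) = s.
Proof.
move=> Ht; rewrite /push_nz; have [->|_] := eqVneq k 0.
  by rewrite /top_val /pop_val Ht.
by rewrite /top_val /pop_val top_push pop_push.
Qed.

Lemma wf_push_nz t k s : wf_pile s -> top t s = None -> wf_pile (push_nz t k s).
Proof. by rewrite /push_nz; case: eqVneq => // Hk Hs Ht; apply: wf_push. Qed.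

Lemma wf_pile_act t g s : wf_pile s -> wf_pile (pile_act t g s).
Proof. by move=> /(wf_pile_val t) [Hv Ht _]; apply: wf_push_nz. Qed.

Lemma pile_actD t g h s : wf_pile s -> pile_act t h (pile_act t g s) = pile_act t (g + h) s.
Proof.
move=> /(wf_pile_val t) [_ Ht _].
by rewrite /pile_act; have [-> ->] := push_nz_val (top_val t s + g) Ht; rewrite addrA.
Qed.

Lemma pile_act0 t s : wf_pile s -> pile_act t 0 s = s.
Proof. by move=> /(wf_pile_val t) [_ _ Es]; rewrite /pile_act addr0 -Es. Qed.

Lemma pile_act_comm t u g h s :
  e t u -> wf_pile s -> pile_act t g (pile_act u h s) = pile_act u h (pile_act t g s).
Proof.
move=> Htu Hs; have Hut : e u t by rewrite e_sym.
have [Hs1 Hus1 Es] := wf_pile_val u Hs.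
set s1 := pop_val u s in Hs1 Hus1 Es; set cu := top_val u s in Es.
have [_ Hts0 Es1] := wf_pile_val t Hs1.
set s0 := pop_val t s1 in Hts0 Es1; set ct := top_val t s1 in Es1.
have Hus0 : top u s0 = None by rewrite -Hus1 Es1 top_push_nz_adj.
have Ht k : top t (push_nz u k s0) = None by rewrite top_push_nz_adj.
have Hu k : top u (push_nz t k s0) = None by rewrite top_push_nz_adj.
have Eu : pile_act u h s = push_nz t ct (push_nz u (cu + h) s0).
  by rewrite /pile_act -/cu -/s1 Es1 push_nz_comm.
have Et : pile_act t g s = push_nz u cu (push_nz t (ct + g) s0).
  rewrite /pile_act Es Es1 push_nz_comm //.
  by have [-> ->] := push_nz_val ct (Ht cu); rewrite push_nz_comm.
rewrite Eu Et /pile_act.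
have [-> ->] := push_nz_val ct (Ht (cu + h)).
have [-> ->] := push_nz_val cu (Hu (ct + g)).
by rewrite push_nz_comm.
Qed.

Lemma wf_pile_nz s t g : wf_pile s -> Some g \in s t -> g != 0.
Proof.
elim=> {s} [|s u h Hs IH Hu Hh] //=.
rewrite /push; case: (t == u); case: (e u t); rewrite ?in_cons //=;
  by [apply: IH | case/orP => [/eqP [->] //|]; apply: IH].
Qed.

Definition pile_run (L : Type) (val : L -> T * V) (w : word L) (s : pile) : pile :=
  foldl (fun s l => pile_act (val l.1).1 (if l.2 then - (val l.1).2 else (val l.1).2) s) s w.

Lemma pile_run_cat L (val : L -> T * V) u v s :
  pile_run val (u ++ v) s = pile_run val v (pile_run val u s).
Proof. exact: foldl_cat. Qed.

Lemma wf_pile_run L (val : L -> T * V) w s : wf_pile s -> wf_pile (pile_run val w s).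
Proof. by elim: w s => [|l w IH] s Hs //=; apply/IH/wf_pile_act. Qed.

End PileOperations.

Definition pile_bounded k B (s : pile 'rV[int]_k) :=
  forall t g, Some g \in s t -> forall j, (absz (g 0%R j) <= B)%N.

Definition pc_run (w : word T) (s : pile int) := pile_run (fun t : T => (t, 1%:Z)) w s.

Lemma pc_run_cat u v s : pc_run (u ++ v) s = pc_run v (pc_run u s).
Proof. exact: pile_run_cat. Qed.

Lemma wf_pc_run w s : wf_pile s -> wf_pile (pc_run w s).
Proof. exact: wf_pile_run. Qed.

Lemma pc_run_sound u v : weq (pc_rel e) u v ->
  forall s, wf_pile s -> pc_run u s = pc_run v s.
Proof.
elim=> {u v} [//| u v _ IH s Hs | u v w _ IH1 _ IH2 s Hs | u v a b s Hs
             | u v r [y [z [Hyz ->]]] s Hs].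
- by rewrite IH.
- by rewrite IH1 // IH2.
- rewrite !pc_run_cat; congr pc_run.
  have Hs0 := wf_pc_run u Hs; rewrite /pile_run /= pile_actD //.
  by case: b; rewrite /= ?addNr ?addrN pile_act0.
- rewrite !pc_run_cat; congr pc_run.
  have Hs0 := wf_pc_run u Hs; rewrite /pc_run in Hs0.
  set s0 := pile_run _ u s in Hs0 *.
  rewrite /pile_run /= (pile_act_comm _ _ Hyz); last exact: wf_pile_act.
  have Hs2 : wf_pile (pile_act y 1 (pile_act y (- 1) s0)) by do 2 apply: wf_pile_act.
  by rewrite pile_actD // addNr pile_act0 // pile_actD // addNr pile_act0.
Qed.

Lemma pc_run_nseq t b n s : wf_pile s ->
  pc_run (nseq n (t, b)) s = pile_act t (if b then - n%:Z else n%:Z) s.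
Proof.
elim: n s => [|n IH] s Hs /=; first by case: b; rewrite ?oppr0 pile_act0.
rewrite IH ?pile_actD //; last exact: wf_pile_act.
by congr pile_act; clear IH; case: b; lia.
Qed.

Lemma pc_run_wpow t k s : wf_pile s -> pc_run (wpow t k) s = pile_act t k s.
Proof.
by move=> Hs; case: k => n; rewrite /wpow pc_run_nseq //; congr pile_act; lia.
Qed.

Section ExtensionPiles.
Variables (x : T) (m : nat).

Local Notation L := (T + 'I_m.+1)%type.
Local Notation W := (weq (ext_rel e x m.+2)).
Local Notation vec := 'rV[int]_m.+2.

(* The syllables at x live in Z^(m+2): coordinate [0] is the exponent of x and
   coordinate [lift ord0 i] that of the generator [inr i] of A. *)
Definition ext_val (l : L) : T * vec :=
  match l with inl t => (t, delta_mx 0 ord0) | inr i => (x, delta_mx 0 (lift ord0 i)) end.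

Definition ext_run w s := pile_run ext_val w s.

Definition A_word (s : seq 'I_m.+1) (g : vec) : word L :=
  flatten [seq wpow (inr i) (g 0 (lift ord0 i)) | i <- s].

Definition syllable t (g : vec) : word L :=
  wpow (inl t) (g 0 ord0) ++ (if t == x then A_word (index_enum 'I_m.+1) g else [::]).

Definition admissible t (g : vec) := t = x \/ forall j, j != ord0 -> g 0 j = 0.

Lemma wcommute_A i j : wcommute (ext_rel e x m.+2) (gen (inr i)) (gen (inr j)).
Proof. by apply: wcommute_of_rel; right; left; exists j, i. Qed.

Lemma wcommute_adj t u : e t u -> wcommute (ext_rel e x m.+2) (gen (inl t)) (gen (inl u)).
Proof.
move=> Htu; apply: wcommute_of_rel; left; exists (wcomm (gen u) (gen t)).
by split=> //; exists u, t; rewrite e_sym.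
Qed.

Lemma wcommute_star_A u i : u = x \/ e x u ->
  wcommute (ext_rel e x m.+2) (gen (inl u)) (gen (inr i)).
Proof.
move=> Hu; apply: wcommute_of_rel; right; right; exists i, (gen u); split=> //.
case: Hu => [->|Hxu]; first exact: weq_refl.
by apply: wcommute_of_rel; exists x, u.
Qed.

Lemma wcommute_A_word w s g : (forall i k, wcommute (ext_rel e x m.+2) w (wpow (inr i) k)) ->
  wcommute (ext_rel e x m.+2) w (A_word s g).
Proof. by move=> H; elim: s => [|i s IH]; [exact: wcommute0 | exact: wcommute_catr]. Qed.

Lemma A_wordD s g h : W (A_word s g ++ A_word s h) (A_word s (g + h)).
Proof.
elim: s => [|i s IH] /=; first exact: weq_refl.
rewrite /A_word /= -!/(A_word _ _) mxE.
have Hc : wcommute (ext_rel e x m.+2) (A_word s g) (wpow (inr i) (h 0 (lift ord0 i))).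
  by apply/wcommute_sym/wcommute_A_word => j k; apply/wcommute_wpow/wcommute_A.
rewrite -catA (catA (A_word s g)).
apply: weq_trans (weq_catl _ (weq_catr _ Hc)) _.
by rewrite -catA catA; apply: weq_cat2; [exact: wpowD | exact: IH].
Qed.

Lemma syllableD t g h : W (syllable t g ++ syllable t h) (syllable t (g + h)).
Proof.
rewrite /syllable mxE; case: (t =P x) => [->|_]; last by rewrite !cats0; apply: wpowD.
have Hc : wcommute (ext_rel e x m.+2) (A_word (index_enum _) g) (wpow (inl x) (h 0 ord0)).
  by apply/wcommute_sym/wcommute_A_word => i k; apply/wcommute_wpow/wcommute_star_A; left.
rewrite -catA (catA (A_word _ g)).
apply: weq_trans (weq_catl _ (weq_catr _ Hc)) _.
by rewrite -catA catA; apply: weq_cat2; [exact: wpowD | exact: A_wordD].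
Qed.

Lemma A_word0 s (g : vec) : (forall i, g 0 (lift ord0 i) = 0) -> A_word s g = [::].
Proof. by move=> H; elim: s => [|i s IH] //=; rewrite /A_word /= H. Qed.

Lemma syllable0 t : syllable t 0 = [::].
Proof. by rewrite /syllable mxE /= A_word0 ?if_same // => i; rewrite mxE. Qed.

Lemma wcommute_syllable t u g h : e u t ->
  wcommute (ext_rel e x m.+2) (syllable t h) (syllable u g).
Proof.
move=> Hut; have Htu : e t u by rewrite e_sym.
have Hc := wcommute_wpow (h 0 ord0) (g 0 ord0) (wcommute_adj Htu).
rewrite /syllable; case: (t =P x) => [Et|_]; case: (u =P x) => [Eu|_].
- by move: (adj_neq Htu); rewrite Et Eu eqxx.
- subst t; rewrite cats0; apply: wcommute_catl => //.
  by apply/wcommute_sym/wcommute_A_word => i k; apply/wcommute_wpow/wcommute_star_A; right.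
- subst u; rewrite cats0; apply: wcommute_catr => //.
  by apply: wcommute_A_word => i k; apply/wcommute_wpow/wcommute_star_A; right.
- by rewrite !cats0.
Qed.

(* [represents s r]: the word [r] lists the syllables of the pile [s] in an
   order in which they can be pushed. *)
Inductive represents : pile vec -> word L -> Prop :=
| represents0 : represents (pile0 vec) [::]
| represents_push s r t g : represents s r -> top t s = None -> g != 0 ->
    admissible t g -> represents (push t g s) (r ++ syllable t g).

Lemma represents_wf s r : represents s r -> wf_pile s.
Proof. by elim=> {s r} [|s r t g _ IH Ht Hg _]; [exact: wf_pile0 | exact: wf_push]. Qed.

Lemma represents_top s r t h : represents s r -> top t s = Some h ->
  exists2 r', represents (pop t s) r' & W r (r' ++ syllable t h) /\ admissible t h.
Proof.
move=> HR; elim: HR h => {s r} [|s r u g HR IH Hu Hg Hok] h //.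
have [<-|Hne] := eqVneq u t.
  by rewrite top_push => -[<-]; rewrite pop_push; exists r => //; split=> //; apply: weq_refl.
case Eut: (e u t); last by rewrite top_push_nadj ?Eut.
have Etu : e t u by rewrite e_sym.
rewrite top_push_adj // => Ht.
have [r' HR' [Hw Hok']] := IH _ Ht.
have [_ Htop _ Es] := wf_pile_top (represents_wf HR) Ht.
have -> : push u g s = push t h (push u g (pop t s)) by rewrite {1}Es push_comm.
rewrite pop_push; exists (r' ++ syllable u g).
  by apply: represents_push; rewrite // -Hu {2}Es top_push_adj.
split=> //; apply: weq_trans (weq_catr _ Hw) _.
by rewrite -!(catA r'); apply: weq_catl; exact: wcommute_syllable.
Qed.

Lemma represents_pile0 r : represents (pile0 vec) r -> W r [::].
Proof.
move=> H; inversion H as [|s r' t g _ _ _ _ Es]; first exact: weq_refl.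
by have := congr1 (fun s => s t) Es; rewrite /push /pile0 eqxx.
Qed.

Lemma represents_weq s r1 r2 : represents s r1 -> represents s r2 -> W r1 r2.
Proof.
move=> H1 H2; elim: H2 r1 H1 => {s r2} [|s r t g HR IH Ht Hg Hok] r1 H1.
  exact: represents_pile0.
have [r' HR' [Hw _]] := represents_top H1 (top_push _ _ _).
rewrite pop_push in HR'.
by apply: weq_trans Hw _; apply/weq_catr/IH.
Qed.

Lemma admissibleD t g h : admissible t g -> admissible t h -> admissible t (g + h).
Proof.
case=> [->|Hg]; first by left.
case=> [->|Hh]; first by left.
by right=> j Hj; rewrite mxE Hg // Hh // addr0.
Qed.

Lemma represents_act s r t g : represents s r -> admissible t g ->
  exists2 r', represents (pile_act t g s) r' & W (r ++ syllable t g) r'.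
Proof.
move=> HR Hok; rewrite /pile_act /top_val /pop_val /push_nz.
case Et: (top t s) => [h|]; last first.
  rewrite add0r; have [->|Hne] := eqVneq g 0.
    by exists r; rewrite // syllable0 cats0; apply: weq_refl.
  by exists (r ++ syllable t g); [apply: represents_push | apply: weq_refl].
have [r' HR' [Hw Hok']] := represents_top HR Et.
have [_ Htop _ _] := wf_pile_top (represents_wf HR) Et.
have Hw2 : W (r ++ syllable t g) (r' ++ syllable t (h + g)).
  by apply: weq_trans (weq_catr _ Hw) _; rewrite -catA; apply/weq_catl/syllableD.
have [E|Hne] := eqVneq (h + g) 0.
  by exists r'; move: Hw2; rewrite // E syllable0 cats0.
by exists (r' ++ syllable t (h + g)) => //; apply: represents_push => //; apply: admissibleD.
Qed.

Lemma delta_lift_coord (i k : 'I_m.+1) (b : bool) :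
  (if b then - delta_mx 0 (lift ord0 i) else delta_mx 0 (lift ord0 i) : vec) 0 (lift ord0 k)
  = if k == i then (if b then -1 else 1) else 0.
Proof.
by case: b; rewrite !mxE eqxx /= (inj_eq lift_inj); case: (k == i); rewrite ?oppr0.
Qed.

Lemma A_word_delta s i b : uniq s ->
  A_word s (if b then - delta_mx 0 (lift ord0 i) else delta_mx 0 (lift ord0 i)) =
  if i \in s then [:: (inr i, b)] else [::].
Proof.
elim: s => [|j s IH] //= /andP [Hj Hu].
rewrite /A_word /= -/(A_word _ _) IH // in_cons delta_lift_coord eq_sym.
have [Eij|_] := eqVneq i j; last by [].
by subst j; rewrite (negbTE Hj) cats0 /=; clear IH; case: b.
Qed.

Lemma syllable_letter l b :
  syllable (ext_val l).1 (if b then - (ext_val l).2 else (ext_val l).2) = [:: (l, b)].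
Proof.
case: l => [t|i] /=; rewrite /syllable.
  rewrite A_word0; last by move=> i; case: b; rewrite !mxE /= ?oppr0.
  by case: b; rewrite !mxE /= if_same.
rewrite eqxx A_word_delta ?index_enum_uniq // mem_index_enum.
by case: b; rewrite !mxE /= ?oppr0.
Qed.

Lemma admissible_letter l b : admissible (ext_val l).1 (if b then - (ext_val l).2 else (ext_val l).2).
Proof.
case: l => [t|i] /=; last by left.
by right=> j Hj; case: b; rewrite !mxE (negbTE Hj) /= ?andbF ?oppr0.
Qed.

Lemma represents_run w s r : represents s r ->
  exists2 r', represents (ext_run w s) r' & W (r ++ w) r'.
Proof.
elim: w s r => [|l w IH] s r HR /=; first by exists r; rewrite ?cats0 //; apply: weq_refl.
have [r1 HR1 Hw1] := represents_act HR (admissible_letter l.1 l.2).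
have [r2 HR2 Hw2] := IH _ _ HR1.
exists r2 => //; apply: weq_trans Hw2.
rewrite syllable_letter -surjective_pairing in Hw1.
by rewrite -cat1s catA; apply: weq_catr.
Qed.


Lemma represents_ext_run w : exists2 r, represents (ext_run w (pile0 vec)) r & W w r.
Proof. exact: represents_run represents0. Qed.
Section Collapse.
Variable M : nat.

Definition collapse (l : L) : word T :=
  match l with inl t => gen t | inr i => nseq (M ^ i.+1) (x, false) end.

Definition collapse_pile (s : pile vec) : pile int := fun t => map (omap (radix M)) (s t).

Lemma wsubst_collapse_inl (w : word T) : wsubst collapse (map (fun l => (inl l.1, l.2)) w) = w.
Proof.
elim: w => [|[a b] w IH] //.
by rewrite map_cons -cat1s wsubst_cat IH; case: b.
Qed.

Lemma wcommute_centraliser_pow c k : in_centraliser e x c ->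
  wcommute (pc_rel e) c (nseq k (x, false)).
Proof. by move=> Hc; elim: k => [|k IH]; [exact: wcommute0 | exact: wcommute_catr Hc IH]. Qed.

Lemma collapse_is_hom : is_hom (ext_rel e x m.+2) (pc_rel e) collapse.
Proof.
move=> r [[r0 [Hr0 ->]] | [[i [j ->]] | [i [c [Hc ->]]]]].
- by rewrite wsubst_collapse_inl; apply: weq_rel1.
- rewrite /wcomm !wsubst_cat !wsubst_winv /wsubst /= !cats0 -/(wsubst _ _).
  rewrite -!nseqD addnC catA -winv_cat -nseqD; exact: weq_Vmul.
- rewrite /wcomm !wsubst_cat !wsubst_winv wsubst_collapse_inl {1 2}/wsubst /= !cats0.
  set A := nseq _ _.
  apply: weq_trans (_ : weq _ (winv A ++ winv c ++ c ++ A) _).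
    by apply/weq_catl/weq_catl/weq_sym/wcommute_centraliser_pow.
  rewrite [winv c ++ _]catA.
  apply: weq_trans (weq_cat (winv A) A (weq_Vmul _ c)) _.
  exact: weq_Vmul.
Qed.

Lemma pc_run_collapse_wpow_inl t k s : wf_pile s ->
  pc_run (wsubst collapse (wpow (inl t) k)) s = pile_act t k s.
Proof.
have -> : wpow (inl t : L) k = map (fun l => (inl l.1, l.2)) (wpow t k).
  by case: k => n; rewrite /wpow map_nseq.
by rewrite wsubst_collapse_inl; apply: pc_run_wpow.
Qed.

Lemma pc_run_collapse_nseq_inr i b n s : wf_pile s ->
  pc_run (wsubst collapse (nseq n (inr i, b))) s
  = pile_act x (if b then - (n * M ^ i.+1)%:Z else (n * M ^ i.+1)%:Z) s.
Proof.
have -> : wsubst collapse (nseq n (inr i, b)) = nseq (n * M ^ i.+1) (x, b).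
  elim: n => [|n IH] //; rewrite -[nseq _.+1 _]cat1s wsubst_cat IH mulSn nseqD.
  by rewrite /wsubst /= cats0; clear IH; case: b; rewrite /winv ?map_nseq ?rev_nseq.
exact: pc_run_nseq.
Qed.

Lemma pc_run_collapse_wpow_inr i k s : wf_pile s ->
  pc_run (wsubst collapse (wpow (inr i) k)) s = pile_act x (k * (M ^ i.+1)%:Z) s.
Proof.
by move=> Hs; case: k => n; rewrite /wpow pc_run_collapse_nseq_inr //; congr pile_act; nia.
Qed.

Lemma pc_run_collapse_A_word r (g : vec) s : wf_pile s ->
  pc_run (wsubst collapse (A_word r g)) s
  = pile_act x (\sum_(i <- r) g 0 (lift ord0 i) * (M ^ i.+1)%:Z) s.
Proof.
elim: r s => [|i r IH] s Hs; first by rewrite big_nil pile_act0.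
rewrite /A_word /= -/(A_word _ _) wsubst_cat pc_run_cat.
rewrite pc_run_collapse_wpow_inr // IH; last exact: wf_pile_act.
by rewrite pile_actD // big_cons.
Qed.

Lemma pc_run_collapse_syllable t (g : vec) s : wf_pile s -> admissible t g ->
  pc_run (wsubst collapse (syllable t g)) s = pile_act t (radix M g) s.
Proof.
move=> Hs Hok; rewrite /syllable; case: (t =P x) => [->|Hne].
  rewrite wsubst_cat pc_run_cat pc_run_collapse_wpow_inl //.
  rewrite pc_run_collapse_A_word; last exact: wf_pile_act.
  by rewrite pile_actD // radixS.
rewrite cats0 pc_run_collapse_wpow_inl // radix_ord0 //.
by case: Hok.
Qed.

Lemma top_collapse_pile t s : top t (collapse_pile s) = omap (radix M) (top t s).
Proof. by rewrite /top /collapse_pile; case: (s t). Qed.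

Lemma collapse_pile_push t g s : collapse_pile (push t g s) = push t (radix M g) (collapse_pile s).
Proof.
apply: functional_extensionality => w; rewrite /collapse_pile /push.
by case: (w == t); case: (e t w).
Qed.

Lemma pc_run_collapse s r : represents s r ->
  (forall t g, Some g \in s t -> radix M g != 0) ->
  wf_pile (collapse_pile s) /\ pc_run (wsubst collapse r) (pile0 int) = collapse_pile s.
Proof.
elim=> {s r} [|s r t g HR IH Ht Hg Hok] Hnz; first by split; [exact: wf_pile0 | by []].
have Hnz' t' g' : Some g' \in s t' -> radix M g' != 0.
  move=> Hin; apply: (Hnz t'); rewrite /push.
  by case: (t' == t); case: (e t t'); rewrite ?in_cons Hin ?orbT.
have Hg' : radix M g != 0 by apply: (Hnz t); rewrite /push eqxx mem_head.
have [Hwf Hrun] := IH Hnz'.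
have Htop : top t (collapse_pile s) = None by rewrite top_collapse_pile Ht.
split; first by rewrite collapse_pile_push; apply: wf_push.
rewrite wsubst_cat pc_run_cat Hrun pc_run_collapse_syllable //.
by rewrite collapse_pile_push /pile_act /top_val /pop_val Htop add0r /push_nz (negbTE Hg').
Qed.

Lemma radix_syllable_nz B s r : (2 * B < M)%N -> represents s r -> pile_bounded B s ->
  forall t g, Some g \in s t -> radix M g != 0.
Proof.
move=> HM HR HB t g Hg; apply: contra (wf_pile_nz (represents_wf HR) Hg) => /eqP Hr.
apply/eqP/(radix_inj HM (HB t g Hg)) => [j|]; first by rewrite mxE.
by rewrite Hr radix0.
Qed.

Lemma collapse_pile_inj B s1 s2 : (2 * B < M)%N -> pile_bounded B s1 -> pile_bounded B s2 ->
  collapse_pile s1 = collapse_pile s2 -> s1 = s2.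
Proof.
move=> HM HB1 HB2 E; apply: functional_extensionality => t.
apply: (map_omap_inj (f := radix M)) => [g h Hg Hh|].
  exact: radix_inj HM (HB1 t g Hg) (HB2 t h Hh).
by have := congr1 (fun s => s t) E.
Qed.

Lemma collapse_reflects_weq B s1 r1 s2 r2 : (2 * B < M)%N ->
  represents s1 r1 -> represents s2 r2 -> pile_bounded B s1 -> pile_bounded B s2 ->
  weq (pc_rel e) (wsubst collapse r1) (wsubst collapse r2) -> W r1 r2.
Proof.
move=> HM HR1 HR2 HB1 HB2 Hw.
have [_ E1] := pc_run_collapse HR1 (radix_syllable_nz HM HR1 HB1).
have [_ E2] := pc_run_collapse HR2 (radix_syllable_nz HM HR2 HB2).
have Es : s1 = s2.
  apply: collapse_pile_inj HM HB1 HB2 _; rewrite -E1 -E2.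
  apply: (pc_run_sound Hw); exact: wf_pile0.
by rewrite Es in HR1; apply: represents_weq HR1 HR2.
Qed.

End Collapse.

End ExtensionPiles.
End Piles.
Local Close Scope ring_scope.

Lemma exists_pile_bound (T : finType) k (I : eqType) (S : seq I) (f : I -> pile T 'rV[int]_k) :
  exists B, forall u, u \in S -> pile_bounded B (f u).
Proof.
exists (\max_(u <- S) \max_(t : T) \max_(g <- pmap id (f u t)) \max_(j < k) absz (g 0%R j)).
move=> u Hu t g Hg j.
apply: leq_trans (leq_bigmax_seq _ Hu isT).
apply: leq_trans (leq_bigmax t).
have Hg' : g \in pmap id (f u t) by rewrite mem_pmap map_id.
apply: leq_trans (leq_bigmax_seq _ Hg' isT).
exact: (leq_bigmax (F := fun j => absz (g 0%R j)) j).
Qed.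

Theorem lemma4p1 (T : finType) (e : rel T) (e_sym : symmetric e)
  (e_irr : irreflexive e) (x : T) (n : nat) (hn : 2 <= n) :
  discriminated_by (ext_rel e x n) (pc_rel e).
Proof.
case: n hn => [|[|m]] // _ S.
have [B HB] := exists_pile_bound S (fun w => ext_run e x (m := m) w (pile0 'rV[int]_m.+2)).
have Hhom := @collapse_is_hom _ e x m (2 * B).+1.
exists (collapse x (2 * B).+1); split=> // u v /In_mem Hu /In_mem Hv Huv Hcol; apply: Huv.
have [ru HRu Hwu] := represents_ext_run e_sym e_irr x u.
have [rv HRv Hwv] := represents_ext_run e_sym e_irr x v.
have Hcol' : weq (pc_rel e) (wsubst (collapse x (2 * B).+1) ru) (wsubst (collapse x (2 * B).+1) rv).
  exact: weq_trans (weq_sym (is_hom_weq Hhom Hwu)) (weq_trans Hcol (is_hom_weq Hhom Hwv)).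
apply: weq_trans Hwu (weq_trans _ (weq_sym Hwv)).
exact: (collapse_reflects_weq e_sym e_irr (ltnSn (2 * B)) HRu HRv (HB u Hu) (HB v Hv) Hcol').
Qed.
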